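(* Fix a leader policy $\pi$ and functions $\tilde Q_h:\mathcal S\times\mathcal B\to\mathbb R$, $h\in[H]$; let $\tilde V_h(s)=\eta^{-1}\log\sum_be^{\eta\tilde Q_h(s,b)}$, $\tilde A_h=\tilde Q_h-\tilde V_h$, $\tilde\nu_h(b\mid s)=\exp(\eta\tilde A_h(s,b))$, $\tilde V_{H+1}=0$. Define $$\Delta_h^{(1)}(s_h,b_h)=\mathbb E_{s_h,b_h}\Bigl[\sum_{i=h}^H\gamma^{i-h}\bigl(r_i^\pi+\gamma P_i^\pi\tilde V_{i+1}-\tilde Q_i\bigr)(s_i,b_i)\Bigr],\qquad \Delta_h^{(2)}(s_h)=\mathbb E_{s_h}\Bigl[\sum_{i=h}^H\gamma^{i-h}\mathrm{KL}\bigl(\nu_i^\pi(\cdot\mid s_i)\,\|\,\tilde\nu_i(\cdot\mid s_i)\bigr)\Bigr],$$ with $\Delta^{(2)}_{H+1}=0$. Then for all $h\in[H]$ and $(s_h,b_h)\in\mathcal S\times\mathcal B$, $$A_h^\pi(s_h,b_h)-\tilde A_h(s_h,b_h)=(\mathbb E_{s_h,b_h}-\mathbb E_{s_h})\bigl[\Delta_h^{(1)}(s_h,b_h)-\gamma\eta^{-1}\Delta_{h+1}^{(2)}(s_{h+1})\bigr]+\eta^{-1}\mathrm{KL}\bigl(\nu_h^\pi(\cdot\mid s_h)\,\|\,\tilde\nu_h(\cdot\mid s_h)\bigr),$$ where $\mathrm{KL}(\nu_h^\pi(\cdot\mid s_h)\|\tilde\nu_h(\cdot\mid s_h))=\eta\,\mathbb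 E_{s_h}[A_h^\pi-\tilde A_h]$. In particular, in the myopic case ($\gamma=0$, $\tilde Q_h=\tilde r_h^\pi$ for some estimated reward $\tilde r$ with $\tilde r_h^\pi(s,b)=\sum_a\pi_h(a\mid s,b)\tilde r_h(s,a,b)$), $$A_h^\pi(s_h,b_h)-\tilde A_h(s_h,b_h)=(\mathbb E_{s_h,b_h}-\mathbb E_{s_h})\bigl[(r_h^\pi-\tilde r_h^\pi)(s_h,b_h)\bigr]+\eta^{-1}\mathrm{KL}\bigl(\nu_h^\pi(\cdot\mid s_h)\|\tilde\nu_h(\cdot\mid s_h)\bigr).$$
   Context: Episodic leader–follower Markov game (true model): state space $\mathcal S$, actions $\mathcal A,\mathcal B$, horizon $H$, transitions $P_h(\cdot\mid s,a,b)$, follower rewards $r_h$. Leader policy $\pi_h(\cdot\mid s,b)\in\Delta(\mathcal A)$; $r_h^\pi(s,b)=\sum_a\pi_h(a\mid s,b)r_h(s,a,b)$, $P_h^\pi(s'\mid s,b)=\sum_a\pi_h(a\mid s,b)P_h(s'\mid s,a,b)$. With $\eta>0$, $\gamma\in[0,1]$: $V_{H+1}^\pi=0$, $Q_h^\pi=r_h^\pi+\gamma P_h^\pi V_{h+1}^\pi$, $V_h^\pi(s)=\eta^{-1}\log\sum_be^{\eta Q_h^\pi(s,b)}$, $A_h^\pi=Q_h^\pi-V_h^\pi$, $\nu_h^\pi(b\mid s)=\exp(\eta A_h^\pi(s,b))$. $\mathbb E_{s_h}$, $\mathbb E_{s_h,b_h}$: conditional expectations given $s_h$, resp. $(s_h,b_h)$,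 over a trajectory of $(\pi,\nu^\pi)$ on the true model ($b_l\sim\nu_l^\pi(\cdot\mid s_l)$, $a_l\sim\pi_l(\cdot\mid s_l,b_l)$, $s_{l+1}\sim P_l$); in particular $\mathbb E_{s_h}$ also averages over $b_h\sim\nu_h^\pi(\cdot\mid s_h)$. *)

From HB Require Import structures.
From mathcomp Require Import all_boot all_order all_algebra.
From mathcomp Require Import reals sequences exp.
Set Implicit Arguments. Unset Strict Implicit. Unset Printing Implicit Defensive.
Import Order.TTheory GRing.Theory Num.Theory.
Local Open Scope ring_scope.

Section LeaderFollower.
Variables (R : realType) (S A B : finType) (H : nat).
(* transitions P h s a b s', follower rewards r h s a b, leader policy pi h s b a *)
Variables (P : nat -> S -> A -> B -> S -> R) (r : nat -> S -> A -> B -> R)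
          (pi : nat -> S -> B -> A -> R) (eta gamma : R).

Definition rew_pi (rr : nat -> S -> A -> B -> R) (h : nat) (s : S) (b : B) : R :=
  \sum_a pi h s b a * rr h s a b.

Definition rpi := rew_pi r.

Definition Ppi (h : nat) (s : S) (b : B) (s' : S) : R :=
  \sum_a pi h s b a * P h s a b s'.

Definition PV (h : nat) (V : S -> R) (s : S) (b : B) : R :=
  \sum_s' Ppi h s b s' * V s'.

Definition softV (q : B -> R) : R := ln (\sum_b expR (eta * q b)) / eta.

(* backward recursion with fuel n = number of remaining steps *)
Fixpoint Vaux (n h : nat) : S -> R :=
  match n with
  | 0 => fun _ => 0
  | n'.+1 => fun s => softV (fun b => rpi h s b + gamma * PV h (Vaux n' h.+1) s b)
  end.

Definition Vpi (h : nat) : S -> R := Vaux (H.+1 - h) h.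
Definition Qpi (h : nat) (s : S) (b : B) : R := rpi h s b + gamma * PV h (Vpi h.+1) s b.
Definition Api (h : nat) (s : S) (b : B) : R := Qpi h s b - Vpi h s.
Definition nupi (h : nat) (s : S) (b : B) : R := expR (eta * Api h s b).

Variable Qt : nat -> S -> B -> R.
Definition Vt (h : nat) (s : S) : R := if (h <= H)%N then softV (Qt h s) else 0.
Definition At (h : nat) (s : S) (b : B) : R := Qt h s b - Vt h s.
Definition nut (h : nat) (s : S) (b : B) : R := expR (eta * At h s b).

Definition KL (p q : B -> R) : R := \sum_b p b * ln (p b / q b).
Definition KLh (h : nat) (s : S) : R := KL (nupi h s) (nut h s).

(* occ h s0 b0 k s b = Pr(s_{h+k} = s, b_{h+k} = b | s_h = s0, b_h = b0)
   along a trajectory of (pi, nu^pi) on the true model *)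
Fixpoint occ (h : nat) (s0 : S) (b0 : B) (k : nat) : S -> B -> R :=
  match k with
  | 0 => fun s b => ((s == s0) && (b == b0))%:R
  | k'.+1 => fun s' b' =>
      \sum_s \sum_b occ h s0 b0 k' s b * Ppi (h + k') s b s' * nupi (h + k').+1 s' b'
  end.

(* same, conditioned only on s_h = s0 (b_h ~ nu_h^pi(.|s0)) *)
Definition occS (h : nat) (s0 : S) (k : nat) (s : S) (b : B) : R :=
  \sum_b0 nupi h s0 b0 * occ h s0 b0 k s b.

Definition Delta1 (h : nat) (s0 : S) (b0 : B) : R :=
  \sum_(h <= i < H.+1) gamma ^+ (i - h) *
     \sum_s \sum_b occ h s0 b0 (i - h) s b *
        (rpi i s b + gamma * PV i (Vt i.+1) s b - Qt i s b).

(* Delta^{(2)}_h(s_h); empty sum (= 0) for h = H+1 *)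
Definition Delta2 (h : nat) (s0 : S) : R :=
  \sum_(h <= i < H.+1) gamma ^+ (i - h) *
     \sum_s \sum_b occS h s0 (i - h) s b * KLh i s.

(* E_{s_h,b_h}[ Delta1_h(s_h,b_h) - gamma eta^{-1} Delta2_{h+1}(s_{h+1}) ] *)
Definition Ysb (h : nat) (s0 : S) (b0 : B) : R :=
  Delta1 h s0 b0 - gamma / eta * \sum_s' Ppi h s0 b0 s' * Delta2 h.+1 s'.

(* (E_{s_h,b_h} - E_{s_h}) applied to a quantity X whose conditional expectation
   given (s_h,b_h) is Y(s_h,b_h) *)
Definition Ediff (Y : B -> R) (h : nat) (s0 : S) (b0 : B) : R :=
  Y b0 - \sum_b nupi h s0 b * Y b.

End LeaderFollower.

From HB Require Import structures.
From mathcomp Require Import all_boot all_order all_algebra.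
From mathcomp Require Import reals sequences exp.
From mathcomp Require Import ring zify.
Import Order.TTheory GRing.Theory Num.Theory.
Local Open Scope ring_scope.
Set Implicit Arguments. Unset Strict Implicit. Unset Printing Implicit Defensive.

(** Since [V_h] is the soft maximum of [Q_h], the policy [nu_h = exp (eta (Q_h - V_h))]
  sums to one, and averaging [A_h - A~_h = (Q_h - Q~_h) - (V_h - V~_h)] against it
  gives [V_h - V~_h = E_nu [Q_h - Q~_h] - KL_h / eta].  The Bellman equations then
  write [Q_h - Q~_h] as the residual [r_h^pi + gamma P_h V~_(h+1) - Q~_h] plus
  [gamma P_h (E_nu [Q_(h+1) - Q~_(h+1)] - KL_(h+1) / eta)].  By the first-step
  decomposition of the occupancy measures, [Ysb] obeys the same backward recursion,
  so [Q_h - Q~_h = Ysb_h], and substituting into the average gives the claim. *)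

Lemma softmax_sum1 (R : realType) (B : finType) (eta : R) (q : B -> R) (b0 : B) :
  eta != 0 -> \sum_b expR (eta * (q b - softV eta q)) = 1.
Proof.
move=> eta_neq0; set Z := \sum_b expR (eta * q b).
have Z_gt0 : 0 < Z.
  rewrite /Z (bigD1 b0) //= ltr_pwDl ?expR_gt0 //.
  by apply: sumr_ge0 => b _; apply/ltW/expR_gt0.
have softmaxE b : expR (eta * (q b - softV eta q)) = expR (eta * q b) / Z.
  by rewrite /softV mulrBr mulrCA divff // mulr1 expRD expRN lnK.
by under eq_bigr do rewrite softmaxE; rewrite -mulr_suml divff ?gt_eqF.
Qed.

Lemma sum_pair_indicator (R : pzRingType) (S B : finType) (s0 : S) (b0 : B)
    (f : S -> B -> R) :
  \sum_s \sum_b ((s == s0) && (b == b0))%:R * f s b = f s0 b0.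
Proof.
rewrite (bigD1 s0) //= [X in _ + X]big1 => [|s s_neq]; last first.
  by rewrite big1 // => b _; rewrite (negbTE s_neq) mul0r.
rewrite addr0 (bigD1 b0) //= [X in _ + X]big1 => [|b b_neq]; last first.
  by rewrite (negbTE b_neq) andbF mul0r.
by rewrite !eqxx mul1r addr0.
Qed.

Lemma exchange_big_pair (R : pzRingType) (S B S' B' : finType)
    (F : S -> B -> S' -> B' -> R) :
  \sum_s \sum_b \sum_s' \sum_b' F s b s' b' =
  \sum_s' \sum_b' \sum_s \sum_b F s b s' b'.
Proof.
under eq_bigr do rewrite exchange_big /=.
rewrite exchange_big /=; apply: eq_bigr => s' _.
by under eq_bigr do rewrite exchange_big /=; rewrite exchange_big.
Qed.

Lemma exchange_big_nat_weighted (R : comPzRingType) (T : finType) (m n : nat)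
    (c : nat -> R) (w : T -> R) (G : nat -> T -> R) :
  \sum_(m <= i < n) c i * \sum_t w t * G i t =
  \sum_t w t * \sum_(m <= i < n) c i * G i t.
Proof.
under eq_bigr do rewrite mulr_sumr.
rewrite exchange_big; apply: eq_bigr => t _; rewrite mulr_sumr.
by apply: eq_bigr => i _; rewrite mulrCA.
Qed.

Section AdvantageGap.
Variables (R : realType) (S A B : finType) (H : nat)
  (P : nat -> S -> A -> B -> S -> R) (r : nat -> S -> A -> B -> R)
  (pi : nat -> S -> B -> A -> R) (eta gamma : R) (Qt : nat -> S -> B -> R).
Hypothesis eta_neq0 : eta != 0.

Local Notation Pp := (Ppi P pi).
Local Notation PV := (PV P pi).
Local Notation V := (Vpi H P r pi eta gamma).
Local Notation Q := (Qpi H P r pi eta gamma).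
Local Notation nu := (nupi H P r pi eta gamma).
Local Notation occ := (occ H P r pi eta gamma).
Local Notation VT := (Vt H eta Qt).
Local Notation KLH := (KLh H P r pi eta gamma Qt).
Local Notation Delta1 := (Delta1 H P r pi eta gamma Qt).
Local Notation Delta2 := (Delta2 H P r pi eta gamma Qt).
Local Notation Ysb := (Ysb H P r pi eta gamma Qt).

(** [step_mean i f s b] is the conditional mean of [f (s_(i+1), b_(i+1))]
  given [(s_i, b_i) = (s, b)], and [occE k h s0 b0 f] that of
  [f (s_(h+k), b_(h+k))] given [(s_h, b_h) = (s0, b0)]. *)
Definition step_mean (i : nat) (f : S -> B -> R) (s : S) (b : B) : R :=
  PV i (fun s' => \sum_b' nu i.+1 s' b' * f s' b') s b.

Definition occE (k h : nat) (s0 : S) (b0 : B) (f : S -> B -> R) : R :=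
  \sum_s \sum_b occ h s0 b0 k s b * f s b.

Lemma occE0 h s0 b0 f : occE 0 h s0 b0 f = f s0 b0.
Proof. exact: sum_pair_indicator. Qed.

Lemma occE_last k h s0 b0 f :
  occE k.+1 h s0 b0 f = occE k h s0 b0 (step_mean (h + k) f).
Proof.
rewrite /occE /step_mean /PV /=.
under eq_bigr do under eq_bigr do rewrite mulr_suml.
under eq_bigr do under eq_bigr do under eq_bigr do rewrite mulr_suml.
rewrite exchange_big_pair; apply: eq_bigr => s _; apply: eq_bigr => b _.
rewrite mulr_sumr; apply: eq_bigr => s' _.
rewrite [RHS]mulrA [RHS]mulr_sumr; apply: eq_bigr => b' _; ring.
Qed.

Lemma occE_first k h s0 b0 f :
  occE k.+1 h s0 b0 f = step_mean h (fun s b => occE k h.+1 s b f) s0 b0.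
Proof.
elim: k f => [|k IH] f.
  rewrite occE_last occE0 addn0 /step_mean /PV.
  by under [RHS]eq_bigr do under eq_bigr do rewrite occE0.
rewrite occE_last IH /step_mean /PV; apply: eq_bigr => s' _; congr (_ * _).
by apply: eq_bigr => b' _; rewrite occE_last addSnnS.
Qed.

Lemma occS_sumE h s0 k (f : S -> B -> R) :
  \sum_s \sum_b occS H P r pi eta gamma h s0 k s b * f s b =
  \sum_b0 nu h s0 b0 * occE k h s0 b0 f.
Proof.
rewrite /occS /occE.
under eq_bigr do under eq_bigr do rewrite mulr_suml.
under eq_bigr do rewrite exchange_big /=.
rewrite exchange_big /=; apply: eq_bigr => b0 _.
rewrite mulr_sumr; apply: eq_bigr => s _; rewrite mulr_sumr.
by apply: eq_bigr => b _; rewrite mulrA.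
Qed.

Lemma step_mean_sum h m n (c : nat -> R) (g : nat -> S -> B -> R) s b :
  \sum_(m <= i < n) c i * step_mean h (g i) s b =
  step_mean h (fun s' b' => \sum_(m <= i < n) c i * g i s' b') s b.
Proof.
rewrite /step_mean /PV exchange_big_nat_weighted; apply: eq_bigr => s' _.
by rewrite exchange_big_nat_weighted.
Qed.

Lemma eq_PV i (f g : S -> R) s b : f =1 g -> PV i f s b = PV i g s b.
Proof. by move=> fg; apply: eq_bigr => s' _; rewrite fg. Qed.

Lemma PVB i (f g : S -> R) s b :
  PV i (fun s' => f s' - g s') s b = PV i f s b - PV i g s b.
Proof. by rewrite /PV -sumrB; apply: eq_bigr => s' _; rewrite mulrBr. Qed.

Lemma Vpi_soft h s : (h <= H)%N -> V h s = softV eta (Q h s).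
Proof. by move=> hH; rewrite /Vpi /Qpi subSn //= /Vpi subSS. Qed.

Lemma Vpi_end s : V H.+1 s = 0.
Proof. by rewrite /Vpi subnn. Qed.

Lemma Vt_end s : VT H.+1 s = 0.
Proof. by rewrite /Vt ltnn. Qed.

Lemma nupi_sum1 h s (b0 : B) : (h <= H)%N -> \sum_b nu h s b = 1.
Proof. by move=> hH; rewrite /nupi /Api Vpi_soft //; apply: softmax_sum1. Qed.

Lemma KLh_advantage_gap h s :
  KLH h s = eta * \sum_b nu h s b *
    (Api H P r pi eta gamma h s b - At H eta Qt h s b).
Proof.
rewrite /KLh /KL mulr_sumr; apply: eq_bigr => b _.
by rewrite /nupi /nut -expRN -expRD expRK; ring.
Qed.

Lemma value_gap h s (b0 : B) : (h <= H)%N ->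
  V h s - VT h s = \sum_b nu h s b * (Q h s b - Qt h s b) - KLH h s / eta.
Proof.
move=> hH; rewrite KLh_advantage_gap /Api /At.
have -> : \sum_b nu h s b * (Q h s b - V h s - (Qt h s b - VT h s)) =
          \sum_b nu h s b * (Q h s b - Qt h s b) - (V h s - VT h s).
  rewrite -[X in _ - X]mul1r -(nupi_sum1 s b0 hH) mulr_suml -sumrB.
  by apply: eq_bigr => b _; ring.
by field.
Qed.

Definition residual (i : nat) (s : S) (b : B) : R :=
  rpi r pi i s b + gamma * PV i (VT i.+1) s b - Qt i s b.

Lemma Q_gap h s b :
  Q h s b - Qt h s b =
  residual h s b + gamma * PV h (fun s' => V h.+1 s' - VT h.+1 s') s b.
Proof. by rewrite PVB /Qpi /residual; ring. Qed.

Lemma discounted_occE_rec h (F : nat -> S -> B -> R) s0 b0 : (h <= H)%N ->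
  \sum_(h <= i < H.+1) gamma ^+ (i - h) * occE (i - h) h s0 b0 (F i) =
  F h s0 b0 + gamma * step_mean h (fun s b =>
    \sum_(h.+1 <= i < H.+1) gamma ^+ (i - h.+1) * occE (i - h.+1) h.+1 s b (F i)) s0 b0.
Proof.
move=> hH; rewrite big_ltn ?ltnS // subnn expr0 mul1r occE0; congr (_ + _).
rewrite -step_mean_sum mulr_sumr; apply: eq_big_nat => i /andP[hi _].
by rewrite (_ : i - h = (i - h.+1).+1)%N ?occE_first ?exprS ?mulrA //; lia.
Qed.

Lemma Delta1_rec h s0 b0 : (h <= H)%N ->
  Delta1 h s0 b0 = residual h s0 b0 + gamma * step_mean h (Delta1 h.+1) s0 b0.
Proof. exact: discounted_occE_rec. Qed.

Lemma Delta2E h s0 : Delta2 h s0 = \sum_b nu h s0 b *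
  \sum_(h <= i < H.+1) gamma ^+ (i - h) * occE (i - h) h s0 b (fun s _ => KLH i s).
Proof.
rewrite -exchange_big_nat_weighted; apply: eq_bigr => i _.
by rewrite occS_sumE.
Qed.

Lemma Delta2_rec h s0 (b0 : B) : (h <= H)%N ->
  Delta2 h s0 = KLH h s0 + gamma * \sum_b nu h s0 b * PV h (Delta2 h.+1) s0 b.
Proof.
move=> hH; rewrite Delta2E.
under eq_bigr do rewrite discounted_occE_rec // mulrDr.
rewrite big_split /= -mulr_suml (nupi_sum1 _ b0) // mul1r; congr (_ + _).
rewrite mulr_sumr; apply: eq_bigr => b _; rewrite mulrCA; congr (_ * (_ * _)).
by apply: eq_PV => s'; rewrite Delta2E.
Qed.

Lemma Ysb_rec h s b : (h < H)%N ->
  Ysb h s b = residual h s b + gamma *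
    PV h (fun s' => \sum_b' nu h.+1 s' b' * Ysb h.+1 s' b' - KLH h.+1 s' / eta) s b.
Proof.
move=> hH; rewrite /Ysb (Delta1_rec _ _ (ltnW hH)) /step_mean /PV -addrA.
congr (_ + _); rewrite !mulr_sumr -sumrB; apply: eq_bigr => s' _.
rewrite (Delta2_rec _ b hH) /PV.
pose D2 b' := \sum_s'' Pp h.+1 s' b' s'' * Delta2 h.+2 s''.
have -> : \sum_b' nu h.+1 s' b' * (Delta1 h.+1 s' b' - gamma / eta * D2 b') =
    \sum_b' nu h.+1 s' b' * Delta1 h.+1 s' b' - gamma / eta * \sum_b' nu h.+1 s' b' * D2 b'.
  by rewrite mulr_sumr -sumrB; apply: eq_bigr => b' _; ring.
by field.
Qed.

Lemma Ysb_last s b : Ysb H s b = residual H s b.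
Proof.
have Delta1_end s' b' : Delta1 H.+1 s' b' = 0 by rewrite /Delta1 big_geq.
have Delta2_end s' : Delta2 H.+1 s' = 0 by rewrite /Delta2 big_geq.
rewrite /Ysb Delta1_rec // /step_mean /PV.
under eq_bigr do under eq_bigr do rewrite Delta1_end mulr0.
under [in X in _ - X]eq_bigr do rewrite Delta2_end mulr0.
by under eq_bigr do rewrite big1_eq mulr0; rewrite !big1_eq !mulr0 subr0 addr0.
Qed.

Lemma Q_gap_Ysb h s b : (h <= H)%N -> Q h s b - Qt h s b = Ysb h s b.
Proof.
move=> hH; rewrite -(subKn hH); elim: (H - h)%N (leq_subr h H) s b => [|k IH] hk s b.
  rewrite subn0 Q_gap Ysb_last (eq_PV _ (g := fun => 0)); last first.
    by move=> s'; rewrite Vpi_end Vt_end subrr.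
  by rewrite /PV big1 ?mulr0 ?addr0 // => s' _; rewrite mulr0.
have kH : (H - k.+1 < H)%N by lia.
rewrite Q_gap Ysb_rec //; congr (_ + _ * _); apply: eq_PV => s'.
rewrite subnSK // (value_gap _ b) ?leq_subr //.
by under eq_bigr do rewrite (IH (ltnW hk)).
Qed.

Lemma advantage_gap h s b : (h <= H)%N ->
  Api H P r pi eta gamma h s b - At H eta Qt h s b =
  Ediff H P r pi eta gamma (fun b' => Q h s b' - Qt h s b') h s b + KLH h s / eta.
Proof.
move=> hH; rewrite /Api /At /Ediff /=.
have -> : KLH h s / eta =
    \sum_b' nu h s b' * (Q h s b' - Qt h s b') - (V h s - VT h s).
  by rewrite (value_gap s b hH); ring.
by ring.
Qed.

End AdvantageGap.

Lemma eq_Ediff (R : realType) (S A B : finType) (H : nat)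
    (P : nat -> S -> A -> B -> S -> R) (r : nat -> S -> A -> B -> R)
    (pi : nat -> S -> B -> A -> R) (eta gamma : R) (Y1 Y2 : B -> R) h s b :
  Y1 =1 Y2 -> Ediff H P r pi eta gamma Y1 h s b = Ediff H P r pi eta gamma Y2 h s b.
Proof. by move=> eY; rewrite /Ediff eY; under eq_bigr do rewrite eY. Qed.

Theorem mainTheorem13 (R : realType) (S A B : finType) (H : nat)
  (P : nat -> S -> A -> B -> S -> R) (r : nat -> S -> A -> B -> R)
  (pi : nat -> S -> B -> A -> R) (eta gamma : R) (Qt : nat -> S -> B -> R) :
  0 < eta -> 0 <= gamma <= 1 ->
  (forall h s a b s', 0 <= P h s a b s') ->
  (forall h s a b, \sum_s' P h s a b s' = 1) ->
  (forall h s b a, 0 <= pi h s b a) ->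
  (forall h s b, \sum_a pi h s b a = 1) ->
  (forall (h : nat) (s : S) (b : B), (0 < h <= H)%N ->
     Api H P r pi eta gamma h s b - At H eta Qt h s b =
       Ediff H P r pi eta gamma
         (fun b' => Ysb H P r pi eta gamma Qt h s b') h s b
       + KLh H P r pi eta gamma Qt h s / eta)
  /\
  (forall (h : nat) (s : S), (0 < h <= H)%N ->
     KLh H P r pi eta gamma Qt h s =
       eta * \sum_b nupi H P r pi eta gamma h s b *
               (Api H P r pi eta gamma h s b - At H eta Qt h s b))
  /\
  (gamma = 0 ->
   forall rt : nat -> S -> A -> B -> R,
   (forall (h : nat) (s : S) (b : B), (0 < h <= H)%N -> Qt h s b = rew_pi pi rt h s b) ->
   forall (h : nat) (s : S) (b : B), (0 < h <= H)%N ->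
     Api H P r pi eta gamma h s b - At H eta Qt h s b =
       Ediff H P r pi eta gamma
         (fun b' => rpi r pi h s b' - rew_pi pi rt h s b') h s b
       + KLh H P r pi eta gamma Qt h s / eta).
Proof.
move=> eta_gt0 _ _ _ _ _; have eta_neq0 : eta != 0 by rewrite gt_eqF.
split; [|split].
- move=> h s b /andP[_ hH]; rewrite advantage_gap //; congr (_ + _).
  by apply: eq_Ediff => b'; rewrite Q_gap_Ysb.
- by move=> h s _; apply: KLh_advantage_gap.
- move=> gamma0 rt Qt_rt h s b hh; rewrite advantage_gap //; last by case/andP: hh.
  congr (_ + _); apply: eq_Ediff => b'.
  by rewrite /Qpi gamma0 mul0r addr0 Qt_rt.
Qed.
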